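(* Let $\vartheta\in\{p,bp,r\}$. Then both of the following inclusions hold and are strict (proper): (i) $\mathcal{H}_{\vartheta}\subset\mathcal{BV}$; (ii) $\mathcal{H}_{\vartheta}\subset\mathcal{BV}_{\vartheta 0}$.
   Context: $\Omega$ denotes the set of all complex double sequences $x=(x_{kl})_{k,l\ge 1}$. A double sequence is $p$-convergent (Pringsheim convergent) to $L$ if for every $\varepsilon>0$ there is $N$ with $|x_{kl}-L|<\varepsilon$ for all $k,l\ge N$; $bp$-convergent if bounded and $p$-convergent; $r$-convergent (regularly convergent) if $p$-convergent and every row and every column converges. For $\vartheta\in\{p,bp,r\}$, $\mathcal{C}_{\vartheta 0}$ is the set of double sequences $\vartheta$-convergent to $0$. $\Delta x_{kl}=x_{kl}-x_{k+1,l}-x_{k,l+1}+x_{k+1,l+1}$, and $\mathcal{H}_{\vartheta}=\{x\in\Omega:\sum_{k,l=1}^{\infty}|kl\,\Delta x_{kl}|<\infty\}\cap\mathcal{C}_{\vartheta 0}$. $\mathcal{BV}=\{x\in\Omega:\sum_{k,l=1}^{\infty}|\Delta x_{kl}|<\infty\}$ is the space of double sequences of bounded variation, and $\mathcal{BV}_{\vartheta 0}=\mathcal{BV}\cap\mathcal{C}_{\vartheta 0}$. *)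

From Stdlib Require Import Reals.
From Coquelicot Require Import Coquelicot.
Open Scope R_scope.

(* A complex double sequence (x_{kl})_{k,l>=1}.  We index by nat starting at 0:
   [x k l] stands for x_{k+1,l+1}. *)
Definition dseq := nat -> nat -> C.

Definition Delta (x : dseq) (k l : nat) : C :=
  (x k l - x (S k) l - x k (S l) + x (S k) (S l))%C.

Definition p_conv (x : dseq) (L : C) : Prop :=
  forall eps : R, 0 < eps -> exists N : nat,
    forall k l : nat, (N <= k)%nat -> (N <= l)%nat -> Cmod (x k l - L)%C < eps.

Definition dbounded (x : dseq) : Prop :=
  exists M : R, forall k l : nat, Cmod (x k l) <= M.

Definition seq_conv (u : nat -> C) : Prop :=
  exists a : C, forall eps : R, 0 < eps -> exists N : nat,
    forall n : nat, (N <= n)%nat -> Cmod (u n - a)%C < eps.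

Definition r_conv (x : dseq) (L : C) : Prop :=
  p_conv x L /\ (forall k, seq_conv (fun l => x k l)) /\ (forall l, seq_conv (fun k => x k l)).

Inductive mode := Mp | Mbp | Mr.

Definition Cth0 (th : mode) (x : dseq) : Prop :=
  match th with
  | Mp => p_conv x 0%C
  | Mbp => dbounded x /\ p_conv x 0%C
  | Mr => r_conv x 0%C
  end.

(* sum_{k,l=1}^oo a_{kl} < oo for nonnegative a: the square partial sums are bounded *)
Definition dsum_finite (a : nat -> nat -> R) : Prop :=
  exists M : R, forall N : nat,
    sum_f_R0 (fun k => sum_f_R0 (fun l => a k l) N) N <= M.

(* H_theta: sum |k l Delta x_{kl}| < oo, and x in C_{theta 0}.
   With the shift, the weight of [Delta x k l] is (k+1)(l+1). *)
Definition Hth (th : mode) (x : dseq) : Prop :=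
  dsum_finite (fun k l => Cmod (RtoC (INR ((S k) * (S l))) * Delta x k l)%C) /\ Cth0 th x.

Definition BV (x : dseq) : Prop :=
  dsum_finite (fun k l => Cmod (Delta x k l)).

Definition BV0 (th : mode) (x : dseq) : Prop := BV x /\ Cth0 th x.

From Pilot Require Import Defs.
From Stdlib Require Import Reals Lra Lia.
From Coquelicot Require Import Coquelicot.
Open Scope R_scope.

(* The inclusions hold because the weight (k+1)(l+1) is at least 1.  For
   strictness take x_{kl} = 1/max(k,l): it tends to 0 in every sense, and
   Delta x is supported on the diagonal with Delta x_{kk} = 1/k - 1/(k+1),
   which telescopes, so x is in BV; but k^2 Delta x_{kk} = k/(k+1) >= 1/2,
   so the weighted double series diverges. *)

Lemma sum_f_R0_telescope (u : nat -> R) (N : nat) :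
  sum_f_R0 (fun k => u k - u (S k)) N = u O - u (S N).
Proof. induction N as [|N IH]; simpl; [|rewrite IH]; ring. Qed.

Lemma sum_f_R0_single (f : nat -> R) (k N : nat) :
  (forall l, l <> k -> f l = 0) -> (k <= N)%nat -> sum_f_R0 f N = f k.
Proof.
  intros Hf. induction N as [|N IH]; intros HkN; simpl.
  - now replace k with O by lia.
  - destruct (Nat.eq_dec k (S N)) as [->|Hne].
    + assert (Hzero : sum_f_R0 f N = 0).
      { rewrite (sum_eq f (fun _ => 0)) by (intros i Hi; apply Hf; lia).
        rewrite sum_cte; ring. }
      rewrite Hzero; ring.
    + rewrite IH, (Hf (S N)) by lia. ring.
Qed.

Lemma dsum_diag (a : nat -> nat -> R) (N : nat) :
  (forall k l, k <> l -> a k l = 0) ->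
  sum_f_R0 (fun k => sum_f_R0 (fun l => a k l) N) N = sum_f_R0 (fun k => a k k) N.
Proof.
  intros Hdiag. apply sum_eq. intros k Hk.
  apply sum_f_R0_single; [|exact Hk]. intros l Hl. apply Hdiag. congruence.
Qed.

Lemma dsum_finite_le (a b : nat -> nat -> R) :
  (forall k l, a k l <= b k l) -> dsum_finite b -> dsum_finite a.
Proof.
  intros Hab [M HM]. exists M. intros N. eapply Rle_trans; [|apply (HM N)].
  apply sum_Rle. intros k _. apply sum_Rle. intros l _. apply Hab.
Qed.

Lemma not_dsum_finite_diag (a : nat -> nat -> R) (c : R) :
  0 < c -> (forall k l, k <> l -> a k l = 0) -> (forall k, c <= a k k) ->
  ~ dsum_finite a.
Proof.
  intros Hc Hdiag Hge [M HM].
  destruct (INR_unbounded (M / c)) as [N HN].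
  specialize (HM N). rewrite dsum_diag in HM by exact Hdiag.
  assert (Hlow : c * INR (S N) <= sum_f_R0 (fun k => a k k) N).
  { rewrite <- sum_cte. apply sum_Rle. intros k _. apply Hge. }
  rewrite S_INR in Hlow.
  assert (Hmul : M < c * INR N).
  { apply (Rmult_gt_compat_l c) in HN; [|exact Hc].
    replace (c * (M / c)) with M in HN by (field; lra). lra. }
  lra.
Qed.

Lemma Cmod_le_INR_mult (n : nat) (z : C) :
  (1 <= n)%nat -> Cmod z <= Cmod (RtoC (INR n) * z).
Proof.
  intros Hn. rewrite Cmod_mult, Cmod_R, Rabs_pos_eq by apply pos_INR.
  apply le_INR in Hn. pose proof (Cmod_ge_0 z). simpl in Hn. nra.
Qed.

Lemma Hth_BV (th : mode) (x : dseq) : Hth th x -> BV x.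
Proof.
  intros [Hsum _]. revert Hsum. apply dsum_finite_le.
  intros k l. apply Cmod_le_INR_mult. lia.
Qed.

(* Qualified because Stdlib's Reals also exports a [Delta]. *)
Lemma Delta_max (f : nat -> C) (k l : nat) :
  Defs.Delta (fun k l => f (Nat.max k l)) k l =
  if Nat.eq_dec k l then (f k - f (S k))%C else 0%C.
Proof.
  unfold Defs.Delta. destruct (Nat.eq_dec k l) as [<-|Hne].
  - rewrite Nat.max_id, Nat.max_id, Nat.max_l, Nat.max_r by lia. ring.
  - destruct (Nat.lt_ge_cases k l).
    + rewrite !Nat.max_r by lia. ring.
    + rewrite !Nat.max_l by lia. ring.
Qed.

Lemma inv_INR_S_eventually_lt (eps : R) :
  0 < eps -> exists N, forall n, (N <= n)%nat -> / INR (S n) < eps.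
Proof.
  intros Heps. destruct (archimed_cor1 eps Heps) as [N [HN HN0]].
  exists N. intros n Hn. eapply Rle_lt_trans; [|exact HN].
  apply Rinv_le_contravar; [apply lt_0_INR; lia | apply le_INR; lia].
Qed.

Section DominatedByInvMax.

Variable x : dseq.
Hypothesis x_le : forall k l, Cmod (x k l) <= / INR (S (Nat.max k l)).

Lemma eventually_small_max (eps : R) :
  0 < eps -> exists N, forall k l, (N <= Nat.max k l)%nat -> Cmod (x k l - 0) < eps.
Proof.
  intros Heps. destruct (inv_INR_S_eventually_lt eps Heps) as [N HN].
  exists N. intros k l Hkl. replace (x k l - 0)%C with (x k l) by ring.
  eapply Rle_lt_trans; [apply x_le | now apply HN].
Qed.

Lemma Cth0_of_le_inv_max (th : mode) : Cth0 th x.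
Proof.
  assert (Hp : p_conv x 0%C).
  { intros eps Heps. destruct (eventually_small_max eps Heps) as [N HN].
    exists N. intros k l Hk _. apply HN. lia. }
  destruct th; simpl.
  - exact Hp.
  - split; [|exact Hp]. exists 1. intros k l. eapply Rle_trans; [apply x_le|].
    rewrite <- Rinv_1. apply Rinv_le_contravar; [lra|].
    rewrite S_INR. pose proof (pos_INR (Nat.max k l)). lra.
  - split; [exact Hp|]. split.
    + intros k. exists 0%C. intros eps Heps.
      destruct (eventually_small_max eps Heps) as [N HN].
      exists N. intros n Hn. apply HN. lia.
    + intros l. exists 0%C. intros eps Heps.
      destruct (eventually_small_max eps Heps) as [N HN].
      exists N. intros n Hn. apply HN. lia.
Qed.

End DominatedByInvMax.

Definition inv_max : dseq := fun k l => RtoC (/ INR (S (Nat.max k l))).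

Definition inv_diff (k : nat) : R := / INR (S k) - / INR (S (S k)).

Lemma inv_diff_eq (k : nat) : inv_diff k = / (INR (S k) * INR (S (S k))).
Proof.
  unfold inv_diff. rewrite !S_INR. pose proof (pos_INR k). field. lra.
Qed.

Lemma Cmod_inv_max (k l : nat) : Cmod (inv_max k l) = / INR (S (Nat.max k l)).
Proof.
  unfold inv_max. rewrite Cmod_R, Rabs_pos_eq; [reflexivity|].
  left. apply Rinv_0_lt_compat, lt_0_INR. lia.
Qed.

Lemma Cth0_inv_max (th : mode) : Cth0 th inv_max.
Proof. apply Cth0_of_le_inv_max. intros k l. rewrite Cmod_inv_max. apply Rle_refl. Qed.

Lemma Delta_inv_max_diag (k : nat) : Defs.Delta inv_max k k = RtoC (inv_diff k).
Proof.
  unfold inv_max. rewrite (Delta_max (fun m => RtoC (/ INR (S m)))).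
  destruct (Nat.eq_dec k k) as [_|]; [|lia]. unfold inv_diff. now rewrite <- RtoC_minus.
Qed.

Lemma Delta_inv_max_offdiag (k l : nat) : k <> l -> Defs.Delta inv_max k l = 0%C.
Proof.
  intros Hkl. unfold inv_max. rewrite (Delta_max (fun m => RtoC (/ INR (S m)))).
  now destruct (Nat.eq_dec k l).
Qed.

Lemma inv_max_BV : BV inv_max.
Proof.
  exists 1. intros N.
  rewrite dsum_diag
    by (intros k l Hkl; now rewrite Delta_inv_max_offdiag, Cmod_0).
  rewrite (sum_eq _ inv_diff).
  - unfold inv_diff. rewrite sum_f_R0_telescope. simpl (INR 1).
    assert (0 < / INR (S (S N))) by (apply Rinv_0_lt_compat, lt_0_INR; lia). lra.
  - intros k _. rewrite Delta_inv_max_diag, Cmod_R, Rabs_pos_eq; [reflexivity|].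
    rewrite inv_diff_eq. left. apply Rinv_0_lt_compat, Rmult_lt_0_compat; apply lt_0_INR; lia.
Qed.

Lemma inv_max_not_Hth (th : mode) : ~ Hth th inv_max.
Proof.
  intros [Hsum _]. revert Hsum. apply (not_dsum_finite_diag _ (1 / 2)); [lra| |].
  - intros k l Hkl. now rewrite Delta_inv_max_offdiag, Cmult_0_r, Cmod_0.
  - intros k. rewrite Delta_inv_max_diag, <- RtoC_mult, Cmod_R.
    assert (Hval : INR (S k * S k) * inv_diff k = INR (S k) / INR (S (S k))).
    { rewrite inv_diff_eq, mult_INR, !S_INR. pose proof (pos_INR k). field. lra. }
    rewrite Hval, !S_INR. pose proof (pos_INR k).
    rewrite Rabs_pos_eq by (apply Rdiv_le_0_compat; lra).
    apply Rmult_le_reg_r with (INR k + 1 + 1); [lra|].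
    field_simplify; lra.
Qed.

Theorem theorem2p3 (th : mode) :
  ((forall x : dseq, Hth th x -> BV x) /\ (exists x : dseq, BV x /\ ~ Hth th x)) /\
  ((forall x : dseq, Hth th x -> BV0 th x) /\ (exists x : dseq, BV0 th x /\ ~ Hth th x)).
Proof.
  split; split.
  - apply Hth_BV.
  - exists inv_max. split; [apply inv_max_BV | apply inv_max_not_Hth].
  - intros x Hx. split; [exact (Hth_BV th x Hx) | apply Hx].
  - exists inv_max.
    split; [split; [apply inv_max_BV | apply Cth0_inv_max] | apply inv_max_not_Hth].
Qed.
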